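(* Let $R$ be a ring and let $(\mathcal{T},\mathcal{F})$ be a torsion pair in $\mathrm{Mod}\text{-}R$ with torsion radical $t$. Then $(\mathcal{T},\mathcal{F})$ is elementary if and only if $t$, regarded as a functor $\mathrm{Mod}\text{-}R\to\mathrm{Ab}$, is coherent. Equivalently, $t=\tau(-)$ is definable by a positive primitive formula $\tau(u)$ of the language $\mathcal{L}(R)$ of right $R$-modules (i.e. $t(M)=\tau(M)$ for every module $M$), and then the torsion class $\mathcal{T}$ is the class of right $R$-modules satisfying $\forall u\,\tau(u)$ and the torsion free class $\mathcal{F}$ is the class of right $R$-modules satisfying $\forall u\,(\tau(u)\to u\doteq 0)$; in particular both $\mathcal{T}$ and $\mathcal{F}$ are finitely axiomatizable (relative to the theory of right $R$-modules).
   Context: A full subcategory of $\mathrm{Mod}\text{-}R$ is definable if it is closed under direct products, pure submodules and direct limits. A torsion pair $(\mathcal{T},\mathcal{F})$ in $\mathrm{Mod}\text{-}R$ is elementary if both $\mathcal{T}$ and $\mathcal{F}$ are definable. The torsion radical $t$ assigns to a module $M$ its largest submodule lying in $\mathcal{T}$. An additive functor $\mathrm{Mod}\text{-}R\to\mathrm{Ab}$ is coherent if it commutes with direct limits and direct products. $\mathcal{L}(R)=(+,-,0,r)_{r\in R}$ is the language of right $R$-modules; for a formula $\tau(u)$, $\tau(M)$ denotes the subgroup of elements of $M$ satisfying it. *)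

(* Right R-modules are modelled as left modules over the
   converse ring R^c: the right action  x . r  is  (r : R^c) *: x. *)
From HB Require Import structures.
From mathcomp Require Import all_boot all_algebra.

Set Implicit Arguments.
Unset Strict Implicit.
Unset Printing Implicit Defensive.

Import GRing.Theory.
Local Open Scope ring_scope.

Definition rmodType (R : nzRingType) := lmodType R^c.

Section Defs.
Variable R : nzRingType.
Local Notation Mod := (rmodType R).

Definition ract (M : Mod) (x : M) (r : R) : M := (r : R^c) *: x.

Definition is_hom (M N : Mod) (f : M -> N) : Prop :=
  (forall x y, f (x + y) = f x + f y) /\ (forall (r : R) x, f (ract x r) = ract (f x) r).

Definition torsion_pair (T F : Mod -> Prop) : Prop :=
  (forall M : Mod, T M <->
     (forall N : Mod, F N -> forall f : M -> N, is_hom f -> forall x, f x = 0)) /\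
  (forall N : Mod, F N <->
     (forall M : Mod, T M -> forall f : M -> N, is_hom f -> forall x, f x = 0)).

(* t is the torsion radical of T: t M is the largest submodule of M lying in T
   (a submodule lies in T iff it is the image of an injective hom from a
   module in T). *)
Definition torsion_radical (T : Mod -> Prop) (t : forall M : Mod, M -> Prop) : Prop :=
  forall M : Mod,
    (exists (X : Mod) (i : X -> M), [/\ T X, is_hom i, injective i &
        forall x, t M x <-> exists y, i y = x]) /\
    (forall (X : Mod) (i : X -> M), T X -> is_hom i -> injective i ->
        forall y, t M (i y)).

Definition is_product (I : Type) (M : I -> Mod) (P : Mod) (p : forall i, P -> M i) : Prop :=
  (forall i, is_hom (p i)) /\
  (forall (Q : Mod) (q : forall i, Q -> M i), (forall i, is_hom (q i)) ->
     exists! h : Q -> P, is_hom h /\ (forall i x, p i (h x) = q i x)).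

Definition directed_system (I : Type) (le : I -> I -> Prop) (M : I -> Mod)
    (f : forall i j, le i j -> M i -> M j) : Prop :=
  [/\ (forall i, le i i), (forall i j k, le i j -> le j k -> le i k),
      inhabited I, (forall i j, exists k, le i k /\ le j k) &
      [/\ (forall i j (h : le i j), is_hom (f i j h)),
          (forall i (h : le i i) x, f i i h x = x) &
          (forall i j k (hij : le i j) (hjk : le j k) (hik : le i k) x,
             f j k hjk (f i j hij x) = f i k hik x)]].

Definition is_direct_limit (I : Type) (le : I -> I -> Prop) (M : I -> Mod)
    (f : forall i j, le i j -> M i -> M j) (L : Mod) (g : forall i, M i -> L) : Prop :=
  [/\ (forall i, is_hom (g i)),
      (forall i j (h : le i j) x, g j (f i j h x) = g i x) &
      (forall (Q : Mod) (q : forall i, M i -> Q), (forall i, is_hom (q i)) ->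
         (forall i j (h : le i j) x, q j (f i j h x) = q i x) ->
         exists! u : L -> Q, is_hom u /\ (forall i x, u (g i x) = q i x))].

Definition pure_in (M : Mod) (S : M -> Prop) : Prop :=
  forall (m n : nat) (r : 'I_m -> 'I_n -> R) (s : 'I_n -> M),
    (forall k, S (s k)) ->
    (exists x : 'I_m -> M, forall k, \sum_(j < m) ract (x j) (r j k) = s k) ->
    exists x : 'I_m -> M, (forall j, S (x j)) /\
                          (forall k, \sum_(j < m) ract (x j) (r j k) = s k).

Definition definable (C : Mod -> Prop) : Prop :=
  [/\ (forall (I : Type) (M : I -> Mod) (P : Mod) (p : forall i, P -> M i),
         @is_product I M P p -> (forall i, C (M i)) -> C P),
      (forall (M N : Mod) (i : N -> M), C M -> is_hom i -> injective i ->
         pure_in (fun x => exists y, i y = x) -> C N) &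
      (forall (I : Type) (le : I -> I -> Prop) (M : I -> Mod)
              (f : forall i j, le i j -> M i -> M j) (L : Mod) (g : forall i, M i -> L),
         @directed_system I le M f -> @is_direct_limit I le M f L g -> (forall i, C (M i)) -> C L)].

Definition elementary (T F : Mod -> Prop) : Prop := definable T /\ definable F.

(* The subfunctor t : Mod-R -> Ab (t(f) = restriction of f) is coherent: the
   canonical comparison maps for products and direct limits are bijective.
   Products/directed colimits in Ab are described concretely. *)
Definition coherent_subfunctor (t : forall M : Mod, M -> Prop) : Prop :=
  (forall (I : Type) (M : I -> Mod) (P : Mod) (p : forall i, P -> M i),
     @is_product I M P p ->
     (forall x y, t P x -> t P y -> (forall i, p i x = p i y) -> x = y) /\
     (forall y : forall i, M i, (forall i, t (M i) (y i)) ->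
        exists x, t P x /\ forall i, p i x = y i)) /\
  (forall (I : Type) (le : I -> I -> Prop) (M : I -> Mod)
          (f : forall i j, le i j -> M i -> M j) (L : Mod) (g : forall i, M i -> L),
     @directed_system I le M f -> @is_direct_limit I le M f L g ->
     (forall x, t L x -> exists i y, t (M i) y /\ g i y = x) /\
     (forall i j (y : M i) (y' : M j), t (M i) y -> t (M j) y' -> g i y = g j y' ->
        exists k (hik : le i k) (hjk : le j k), f i k hik y = f j k hjk y')).

End Defs.

(* positive primitive formulas tau(u) of L(R) in one free variable u, in the
   normal form  exists w_1..w_m, /\_{k<n} ( u.a_k + sum_j w_j.b_{jk} = 0 ). *)
Record ppf (R : nzRingType) := PPF {
  pp_m : nat; pp_n : nat;
  pp_a : 'I_pp_n -> R;
  pp_b : 'I_pp_m -> 'I_pp_n -> R }.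

Definition pp_holds (R : nzRingType) (tau : ppf R) (M : rmodType R) (u : M) : Prop :=
  exists w : 'I_(pp_m tau) -> M, forall k : 'I_(pp_n tau),
    ract u (@pp_a R tau k) + \sum_(j < pp_m tau) ract (w j) (@pp_b R tau j k) = 0.

(* If (T, F) is elementary, t commutes with products because T is closed under products, and
   with direct limits because, for L the direct limit of the M_i, the direct limit of the
   torsion free modules M_i / t(M_i) is L / K, with K the union of the images of the t(M_i);
   this quotient lies in F, so t(L) = K.
   Conversely, let t be coherent. Every module is the direct limit of finitely presented
   modules, so each x in t(M) is the image of some y in t(M_i) with M_i finitely presented,
   and the pp formula generating the pp-type of y defines a subfunctor of t containing x. If
   no single such formula defined all of t, a product of counterexamples, one per formula,
   would contain an element of t satisfying none of them. *)

From HB Require Import structures.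
From mathcomp Require Import all_boot all_algebra.
From mathcomp Require Import boolp.

Set Implicit Arguments.
Unset Strict Implicit.
Unset Printing Implicit Defensive.

Import GRing.Theory.
Local Open Scope ring_scope.

Section RmodOfOps.
Variables (R : nzRingType) (X : Type) (zero : X) (opp : X -> X) (add : X -> X -> X)
  (act : X -> R -> X).
Hypotheses (addA : associative add) (addC : commutative add) (add0 : left_id zero add)
  (addN : left_inverse zero opp add)
  (actA : forall x r s, act (act x r) s = act x (r * s))
  (act1 : forall x, act x 1 = x)
  (actDl : forall r x y, act (add x y) r = add (act x r) (act y r))
  (actDr : forall x r s, act x (r + s) = add (act x r) (act x s)).

Definition rmod_carrier : Type := X.
HB.instance Definition _ := gen_eqMixin rmod_carrier.
HB.instance Definition _ := gen_choiceMixin rmod_carrier.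
HB.instance Definition _ := GRing.isZmodule.Build rmod_carrier addA addC add0 addN.
HB.instance Definition _ := GRing.Zmodule_isLmodule.Build R^c rmod_carrier
  (fun r s x => actA x s r) act1 (fun r x y => actDl r x y) (fun x r s => actDr x r s).
Definition rmod_of_ops : rmodType R := rmod_carrier.

End RmodOfOps.

Section Homomorphisms.
Variable R : nzRingType.
Local Notation Mod := (rmodType R).

Lemma ractA (M : Mod) (x : M) r s : ract (ract x r) s = ract x (r * s).
Proof. exact: scalerA. Qed.
Lemma ract1 (M : Mod) (x : M) : ract x 1 = x.
Proof. exact: scale1r. Qed.
Lemma ractr0 (M : Mod) (x : M) : ract x 0 = 0.
Proof. exact: scale0r. Qed.
Lemma ract0r (M : Mod) r : ract (0 : M) r = 0.
Proof. exact: scaler0. Qed.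
Lemma ractDl (M : Mod) (x y : M) r : ract (x + y) r = ract x r + ract y r.
Proof. exact: scalerDr. Qed.
Lemma ractDr (M : Mod) (x : M) r s : ract x (r + s) = ract x r + ract x s.
Proof. exact: scalerDl. Qed.
Lemma ractNl (M : Mod) (x : M) r : ract (- x) r = - ract x r.
Proof. exact: scalerN. Qed.
Lemma ractNr (M : Mod) (x : M) r : ract x (- r) = - ract x r.
Proof. exact: scaleNr. Qed.
Lemma ract_suml (M : Mod) (I : Type) (s : seq I) (P : pred I) (F : I -> M) r :
  ract (\sum_(i <- s | P i) F i) r = \sum_(i <- s | P i) ract (F i) r.
Proof. exact: scaler_sumr. Qed.

Section Hom.
Variables (M N : Mod) (f : M -> N) (hf : is_hom f).
Lemma homD x y : f (x + y) = f x + f y. Proof. exact: hf.1. Qed.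
Lemma homZ x r : f (ract x r) = ract (f x) r. Proof. exact: hf.2. Qed.
Lemma hom0 : f 0 = 0.
Proof. by apply: (addrI (f 0)); rewrite -homD !addr0. Qed.
Lemma homN x : f (- x) = - f x.
Proof. by apply: (addrI (f x)); rewrite -homD !subrr hom0. Qed.
Lemma homB x y : f (x - y) = f x - f y.
Proof. by rewrite homD homN. Qed.
Lemma hom_sum (I : Type) (s : seq I) (P : pred I) (F : I -> M) :
  f (\sum_(i <- s | P i) F i) = \sum_(i <- s | P i) f (F i).
Proof. exact: (big_morph f homD hom0). Qed.
End Hom.

Lemma hom_comp (M N Q : Mod) (f : M -> N) (g : N -> Q) :
  is_hom f -> is_hom g -> is_hom (g \o f).
Proof. by move=> hf hg; split=> * /=; rewrite ?(homD hf, homD hg, homZ hf, homZ hg). Qed.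

Lemma hom_id (M : Mod) : is_hom (@id M). Proof. by []. Qed.

Lemma hom_zero (M N : Mod) : is_hom (fun _ : M => 0 : N).
Proof. by split=> *; rewrite ?addr0 ?ract0r. Qed.

Lemma hom_ract (M : Mod) (x : M) : is_hom (fun r : (R^c)^o => ract x r).
Proof. by split=> *; rewrite ?ractDr // ractA. Qed.

Lemma hom_unique (P Q : Mod) (C : (P -> Q) -> Prop) (h1 h2 : P -> Q) :
  (exists! h, is_hom h /\ C h) -> is_hom h1 -> C h1 -> is_hom h2 -> C h2 -> h1 = h2.
Proof. by move=> [h [_ U]] ? ? ? ?; rewrite -(U h1) // -(U h2). Qed.

Lemma hom_factor_surj (A B N : Mod) (p : A -> B) (g : A -> N) :
  is_hom p -> is_hom g -> (forall b, exists a, p a = b) ->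
  (forall a, p a = 0 -> g a = 0) ->
  exists h : B -> N, is_hom h /\ forall a, h (p a) = g a.
Proof.
move=> hp hg /(_ _) /cid p_surj gK.
pose h b := g (proj1_sig (p_surj b)).
have hE a : h (p a) = g a.
  rewrite /h; case: (p_surj _) => a' /= e.
  by apply/eqP; rewrite -subr_eq0 -(homB hg) gK // (homB hp) e subrr.
exists h; split=> //; split=> [b b'|r b].
  by case: (p_surj b) (p_surj b') => a <- [a' <-]; rewrite -(homD hp) !hE (homD hg).
by case: (p_surj b) => a <-; rewrite -(homZ hp) !hE (homZ hg).
Qed.

End Homomorphisms.

Section ModuleConstructions.
Variable R : nzRingType.
Local Notation Mod := (rmodType R).

Definition is_submod (M : Mod) (S : M -> Prop) :=
  [/\ S 0, (forall x y, S x -> S y -> S (x + y)), (forall x, S x -> S (- x)) &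
      (forall x r, S x -> S (ract x r))].

Section SubmodTheory.
Variables (M : Mod) (S : M -> Prop) (hS : is_submod S).
Lemma submod0 : S 0. Proof. by case: hS. Qed.
Lemma submodD x y : S x -> S y -> S (x + y). Proof. by case: hS => _ h _ _; apply: h. Qed.
Lemma submodN x : S x -> S (- x). Proof. by case: hS => _ _ h _; apply: h. Qed.
Lemma submodZ x r : S x -> S (ract x r). Proof. by case: hS => _ _ _ h; apply: h. Qed.
Lemma submodB x y : S x -> S y -> S (x - y).
Proof. by move=> Sx Sy; apply: submodD => //; apply: submodN. Qed.
End SubmodTheory.

Lemma submodT (M : Mod) : is_submod (fun _ : M => True). Proof. by []. Qed.

Lemma ker_submod (M N : Mod) (h : M -> N) : is_hom h -> is_submod (fun x => h x = 0).
Proof.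
move=> hh; split=> [|x y ex ey|x ex|x r ex]; first exact: hom0 hh.
- by rewrite (homD hh) ex ey addr0.
- by rewrite (homN hh) ex oppr0.
- by rewrite (homZ hh) ex ract0r.
Qed.

Lemma preim_submod (M N : Mod) (h : M -> N) (S : N -> Prop) :
  is_hom h -> is_submod S -> is_submod (fun x => S (h x)).
Proof.
move=> hh hS; split=> [|x y|x|x r]; rewrite ?(hom0 hh, homD hh, homN hh, homZ hh).
- exact: submod0.
- exact: submodD.
- exact: submodN.
- exact: submodZ.
Qed.

Section QuotientModule.
Variables (M : Mod) (S : M -> Prop) (hS : is_submod S).

Definition coset (x : M) : M -> Prop := fun y => S (y - x).
Definition cosets := {C : M -> Prop | exists x, C = coset x}.
Definition qclass (x : M) : cosets := exist _ (coset x) (ex_intro _ x erefl).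
Definition qrepr (C : cosets) : M := proj1_sig (cid (proj2_sig C)).

Lemma qreprK C : qclass (qrepr C) = C.
Proof.
case: C => C hC; rewrite /qrepr /qclass /=; case: (cid hC) => x /= e.
exact: eq_exist.
Qed.

Lemma eq_qclass x y : qclass x = qclass y <-> S (x - y).
Proof.
split=> [/(congr1 (@proj1_sig _ _)) /= e|Sxy].
  have : coset x x by rewrite /coset subrr; exact: submod0.
  by rewrite e.
apply: eq_exist; apply/funext => z; apply/propext; rewrite /coset.
have -> : z - x = (z - y) - (x - y) by rewrite opprB addrA subrK.
split=> [Szx|Szy]; last exact: submodB.
by rewrite -[z - y](subrK (x - y)); apply: submodD.
Qed.

Lemma qreprP x : S (qrepr (qclass x) - x).
Proof. by apply/eq_qclass; rewrite qreprK. Qed.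

Definition qadd (a b : cosets) := qclass (qrepr a + qrepr b).
Definition qopp (a : cosets) := qclass (- qrepr a).
Definition qact (a : cosets) (r : R) := qclass (ract (qrepr a) r).

Lemma qaddE x y : qadd (qclass x) (qclass y) = qclass (x + y).
Proof.
apply/eq_qclass; rewrite opprD addrACA.
by apply: submodD hS _ _ (qreprP x) (qreprP y).
Qed.
Lemma qoppE x : qopp (qclass x) = qclass (- x).
Proof. by apply/eq_qclass; rewrite -opprD; apply: submodN hS _ (qreprP x). Qed.
Lemma qactE x r : qact (qclass x) r = qclass (ract x r).
Proof. by apply/eq_qclass; rewrite -ractNl -ractDl; apply: submodZ hS _ _ (qreprP x). Qed.

Lemma qclass_ind (P : cosets -> Prop) : (forall x, P (qclass x)) -> forall C, P C.
Proof. by move=> h C; rewrite -(qreprK C). Qed.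

Fact qaddA : associative qadd.
Proof. by elim/qclass_ind=> x; elim/qclass_ind=> y; elim/qclass_ind=> z; rewrite !qaddE addrA. Qed.
Fact qaddC : commutative qadd.
Proof. by elim/qclass_ind=> x; elim/qclass_ind=> y; rewrite !qaddE addrC. Qed.
Fact qadd0 : left_id (qclass 0) qadd.
Proof. by elim/qclass_ind=> x; rewrite qaddE add0r. Qed.
Fact qaddN : left_inverse (qclass 0) qopp qadd.
Proof. by elim/qclass_ind=> x; rewrite qoppE qaddE addNr. Qed.
Fact qactA C r s : qact (qact C r) s = qact C (r * s).
Proof. by elim/qclass_ind: C => x; rewrite !qactE ractA. Qed.
Fact qact1 C : qact C 1 = C.
Proof. by elim/qclass_ind: C => x; rewrite qactE ract1. Qed.
Fact qactDl r C D : qact (qadd C D) r = qadd (qact C r) (qact D r).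
Proof. by elim/qclass_ind: C => x; elim/qclass_ind: D => y; rewrite !(qactE, qaddE) ractDl. Qed.
Fact qactDr C r s : qact C (r + s) = qadd (qact C r) (qact C s).
Proof. by elim/qclass_ind: C => x; rewrite !(qactE, qaddE) ractDr. Qed.

Definition quotM : Mod := rmod_of_ops qaddA qaddC qadd0 qaddN qactA qact1 qactDl qactDr.
Definition proj (x : M) : quotM := qclass x.

Lemma proj_hom : is_hom proj.
Proof. by split=> [x y|r x]; symmetry; [exact: qaddE | exact: qactE]. Qed.
Lemma proj_eq x y : proj x = proj y <-> S (x - y).
Proof. exact: eq_qclass. Qed.
Lemma proj_eq0 x : proj x = 0 <-> S x.
Proof. by rewrite -[0 : quotM]/(proj 0) proj_eq subr0. Qed.
Lemma proj_surj (C : quotM) : exists x, proj x = C.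
Proof. by exists (qrepr C); rewrite /proj qreprK. Qed.
Lemma quotM_ind (P : quotM -> Prop) : (forall x, P (proj x)) -> forall C, P C.
Proof. exact: qclass_ind. Qed.

Section Factor.
Variables (N : Mod) (h : M -> N) (hh : is_hom h) (hK : forall x, S x -> h x = 0).
Definition qfactor (C : quotM) : N := h (qrepr C).
Lemma qfactorE x : qfactor (proj x) = h x.
Proof. by apply/eqP; rewrite -subr_eq0 -(homB hh) hK //; exact: qreprP. Qed.
Lemma qfactor_hom : is_hom qfactor.
Proof.
split=> [|r]; elim/quotM_ind=> x; first elim/quotM_ind=> y.
  by rewrite -(homD proj_hom) !qfactorE (homD hh).
by rewrite -(homZ proj_hom) !qfactorE (homZ hh).
Qed.
End Factor.
End QuotientModule.

Section SubmoduleModule.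
Variables (M : Mod) (S : M -> Prop) (hS : is_submod S).
Local Notation X := {x : M | S x}.

Lemma sval_inj (a b : X) : sval a = sval b -> a = b.
Proof. by case: a => a Sa; case: b => b Sb /= e; apply: eq_exist. Qed.

Definition sadd (a b : X) : X := exist _ _ (submodD hS (svalP a) (svalP b)).
Definition sopp (a : X) : X := exist _ _ (submodN hS (svalP a)).
Definition sact (a : X) (r : R) : X := exist _ _ (submodZ hS r (svalP a)).

Fact saddA : associative sadd. Proof. by move=> *; apply: sval_inj; rewrite /= addrA. Qed.
Fact saddC : commutative sadd. Proof. by move=> *; apply: sval_inj; rewrite /= addrC. Qed.
Fact sadd0 : left_id (exist _ _ (submod0 hS)) sadd.
Proof. by move=> *; apply: sval_inj; rewrite /= add0r. Qed.
Fact saddN : left_inverse (exist _ _ (submod0 hS)) sopp sadd.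
Proof. by move=> *; apply: sval_inj; rewrite /= addNr. Qed.
Fact sactA a r s : sact (sact a r) s = sact a (r * s).
Proof. by apply: sval_inj; rewrite /= ractA. Qed.
Fact sact1 a : sact a 1 = a. Proof. by apply: sval_inj; rewrite /= ract1. Qed.
Fact sactDl r a b : sact (sadd a b) r = sadd (sact a r) (sact b r).
Proof. by apply: sval_inj; rewrite /= ractDl. Qed.
Fact sactDr a r s : sact a (r + s) = sadd (sact a r) (sact a s).
Proof. by apply: sval_inj; rewrite /= ractDr. Qed.

Definition subM : Mod := rmod_of_ops saddA saddC sadd0 saddN sactA sact1 sactDl sactDr.
Definition incl (x : subM) : M := sval x.
Lemma incl_hom : is_hom incl. Proof. by []. Qed.
Lemma incl_mem (x : subM) : S (incl x). Proof. exact: svalP. Qed.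
End SubmoduleModule.

Section ProductModule.
Variables (I : Type) (M : I -> Mod).
Local Notation X := (forall i, M i).
Local Notation funext_dep := functional_extensionality_dep.

Definition padd (x y : X) : X := fun i => x i + y i.
Definition popp (x : X) : X := fun i => - x i.
Definition pact (x : X) (r : R) : X := fun i => ract (x i) r.

Fact paddA : associative padd. Proof. by move=> *; apply: funext_dep => i; apply: addrA. Qed.
Fact paddC : commutative padd. Proof. by move=> *; apply: funext_dep => i; apply: addrC. Qed.
Fact padd0 : left_id (fun i => 0) padd.
Proof. by move=> *; apply: funext_dep => i; apply: add0r. Qed.
Fact paddN : left_inverse (fun i => 0) popp padd.
Proof. by move=> *; apply: funext_dep => i; apply: addNr. Qed.
Fact pactA x r s : pact (pact x r) s = pact x (r * s).
Proof. by apply: funext_dep => i; apply: ractA. Qed.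
Fact pact1 x : pact x 1 = x. Proof. by apply: funext_dep => i; apply: ract1. Qed.
Fact pactDl r x y : pact (padd x y) r = padd (pact x r) (pact y r).
Proof. by apply: funext_dep => i; apply: ractDl. Qed.
Fact pactDr x r s : pact x (r + s) = padd (pact x r) (pact x s).
Proof. by apply: funext_dep => i; apply: ractDr. Qed.

Definition prodM : Mod := rmod_of_ops paddA paddC padd0 paddN pactA pact1 pactDl pactDr.
Definition coord i (x : prodM) : M i := x i.

Lemma prodM_is_product : is_product coord.
Proof.
split=> [i|Q q hq]; first by split.
exists (fun x i => q i x); split.
  split=> //; split=> [x y|r x]; apply: funext_dep => i.
    exact: homD (hq i) _ _.
  exact: homZ (hq i) _ _.
by move=> h [_ e]; apply/funext => x; apply: funext_dep => i; rewrite -e.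
Qed.
End ProductModule.

(* Every [x] is the image of [1] under [r |-> x r] from the regular module, so the universal
   property of [P] tested on the regular module yields elements with prescribed coordinates,
   uniquely. *)
Section Products.
Variables (I : Type) (M : I -> Mod) (P : Mod) (p : forall i, P -> M i).
Hypothesis hP : is_product p.

Lemma prod_exists (y : forall i, M i) : exists x, forall i, p i x = y i.
Proof.
have [h [[_ hc] _]] := hP.2 _ _ (fun i => hom_ract (y i)).
by exists (h 1) => i; rewrite hc ract1.
Qed.

Lemma prod_ext (x x' : P) : (forall i, p i x = p i x') -> x = x'.
Proof.
move=> e; have U := hP.2 _ _ (fun i => hom_ract (p i x)).
have := hom_unique U (hom_ract x) _ (hom_ract x') _.
move=> /(_ _ _) /(congr1 (fun h => h 1)); rewrite !ract1; apply=> i r.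
  by rewrite (homZ (hP.1 i)).
by rewrite (homZ (hP.1 i)) e.
Qed.
End Products.

End ModuleConstructions.

Section DirectLimits.
Variable R : nzRingType.
Local Notation Mod := (rmodType R).
Variables (I : Type) (le : I -> I -> Prop) (M : I -> Mod)
  (f : forall i j, le i j -> M i -> M j).
Hypothesis hD : directed_system f.

Lemma sys_refl i : le i i. Proof. by case: hD. Qed.
Lemma sys_trans i j k : le i j -> le j k -> le i k. Proof. by case: hD => _ h _ _ _; apply: h. Qed.
Lemma sys_directed i j : exists k, le i k /\ le j k. Proof. by case: hD. Qed.
Lemma sys_hom i j (h : le i j) : is_hom (f h). Proof. by case: hD => _ _ _ _ []. Qed.

Lemma sys_ub_fin n (s : 'I_n -> I) i : exists2 k, le i k & forall j, le (s j) k.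
Proof.
elim: n s => [|n IH] s; first by exists i; [exact: sys_refl | case].
have [k hik hk] := IH (fun j => s (lift ord0 j)).
have [k' [hkk' hsk']] := sys_directed k (s ord0).
exists k'; first exact: sys_trans hik hkk'.
by move=> j; case: (unliftP ord0 j) => [j' ->|->] //; exact: sys_trans (hk j') hkk'.
Qed.

(* [push k x] is the image of [x] at stage [k], and [0] when [k] is not above the stage of [x]. *)
Definition push i k (x : M i) : M k :=
  if pselect (le i k) is left h then f h x else 0.

Lemma pushE i k (h : le i k) x : push k x = f h x.
Proof. by rewrite /push; case: pselect => // h'; rewrite (Prop_irrelevance h' h). Qed.

Lemma push_hom i k : is_hom (@push i k).
Proof.
rewrite /push; case: pselect => [h|_]; [exact: sys_hom | exact: hom_zero].
Qed.

Lemma push_comp i j k (x : M i) : le i j -> le j k -> push k (push j x) = push k x.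
Proof.
move=> hij hjk; rewrite (pushE hij) (pushE hjk) (pushE (sys_trans hij hjk)).
by case: hD => _ _ _ _ [_ _ h]; apply: h.
Qed.

Section Limit.
Variables (L : Mod) (g : forall i, M i -> L).
Arguments g : clear implicits.
Hypothesis hL : is_direct_limit f g.

Lemma lim_hom (i : I) : is_hom (g i). Proof. by case: hL. Qed.

Lemma lim_push i k (x : M i) : le i k -> g k (push k x) = g i x.
Proof. by move=> h; rewrite (pushE h); case: hL => _ ->. Qed.

Lemma lim_image_submod (S : forall i, M i -> Prop) :
  (forall i, is_submod (S i)) -> (forall i j (h : le i j) x, S i x -> S j (f h x)) ->
  is_submod (fun x => exists i y, S i y /\ g i y = x).
Proof.
move=> hS hSf; have [i0] : inhabited I by case: hD.
split=> [|_ _ [i [y [Sy <-]]] [j [y' [Sy' <-]]]|_ [i [y [Sy <-]]]|_ r [i [y [Sy <-]]]].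
- by exists i0, 0; rewrite (hom0 (lim_hom i0)); split=> //; apply: submod0.
- have [k [hik hjk]] := sys_directed i j.
  exists k, (push k y + push k y'); rewrite (homD (lim_hom k)) !lim_push //.
  split; last by [].
  by apply: (submodD (hS k)); rewrite ?(pushE hik) ?(pushE hjk); apply: hSf.
- by exists i, (- y); rewrite (homN (lim_hom i)); split=> //; apply: submodN.
- by exists i, (ract y r); rewrite (homZ (lim_hom i)); split=> //; apply: submodZ.
Qed.

(* The projection onto the quotient by the union of the images is a morphism of cones from
   the zero cone, hence zero. *)
Lemma lim_surj (x : L) : exists i y, g i y = x.
Proof.
have hS := lim_image_submod (fun i => submodT (M i)) (fun _ _ _ _ _ => Logic.I).
have [_ _ U] := hL.
have proj_zero : proj hS = fun _ => 0.
  apply: (hom_unique (U _ (fun i _ => 0) (fun i => hom_zero _ _) (fun _ _ _ _ => erefl)))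
    (proj_hom hS) _ (hom_zero _ _) _ => // i y.
  by apply/proj_eq0; exists i, y.
have /proj_eq0 [i [y [_ <-]]] : proj hS x = 0 by rewrite proj_zero.
by exists i, y.
Qed.

(* [L] maps to the reduced product of the [M k] modulo eventually vanishing families, where
   [x : M i] goes to the class of its germ [(push k x)_k]. *)
Lemma lim_eq0 i (x : M i) : g i x = 0 -> exists2 k, le i k & push k x = 0.
Proof.
pose germ j (y : M j) : prodM M := fun k => push k y.
have germ_hom j : is_hom (@germ j).
  by split=> *; apply: functional_extensionality_dep => k; rewrite /germ /=
    ?(homD (push_hom _ _)) ?(homZ (push_hom _ _)).
pose EZ (z : prodM M) := exists k0, forall k, le k0 k -> z k = 0.
have hEZ : is_submod EZ.
  have [i0] : inhabited I by case: hD.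
  split=> [|z z' [k0 hz] [k0' hz']|z [k0 hz]|z r [k0 hz]].
  - by exists i0.
  - have [k1 [h0 h0']] := sys_directed k0 k0'.
    exists k1 => k hk; change (z k + z' k = 0).
    by rewrite hz ?hz' ?addr0 //; [exact: sys_trans h0' hk | exact: sys_trans h0 hk].
  - by exists k0 => k hk; change (- z k = 0); rewrite hz ?oppr0.
  - by exists k0 => k hk; change (ract (z k) r = 0); rewrite hz ?ract0r.
pose c j := proj hEZ \o @germ j.
have c_hom j : is_hom (c j) := hom_comp (germ_hom j) (proj_hom hEZ).
have c_compat j j' (h : le j j') y : c j' (f h y) = c j y.
  apply/proj_eq; exists j' => k hk.
  change (push k (f h y) - push k y = 0).
  by rewrite -(pushE h) push_comp ?subrr.
have [_ _ U] := hL; have [u [[hu uc] _]] := U _ c c_hom c_compat.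
move=> /(congr1 u); rewrite uc (hom0 hu) => /proj_eq0 [k0 hk0].
have [k [hik hk0k]] := sys_directed i k0.
by exists k => //; apply: hk0.
Qed.

Lemma lim_eq i j (x : M i) (y : M j) : g i x = g j y ->
  exists k (hik : le i k) (hjk : le j k), f hik x = f hjk y.
Proof.
move=> e; have [k0 [hik0 hjk0]] := sys_directed i j.
have /lim_eq0 [k hk0k] : g k0 (push k0 x - push k0 y) = 0.
  by rewrite (homB (lim_hom k0)) !lim_push // e subrr.
rewrite (homB (push_hom _ _)) !push_comp // => /eqP; rewrite subr_eq0 => /eqP e'.
exists k, (sys_trans hik0 hk0k), (sys_trans hjk0 hk0k).
by rewrite -!pushE.
Qed.

Lemma lim_lift_fin n (w : 'I_n -> L) i :
  exists2 k, le i k & exists z : 'I_n -> M k, forall j, g k (z j) = w j.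
Proof.
have /choice [s hs] : forall j, exists p : {k : I & M k}, g _ (tagged p) = w j.
  by move=> j; have [k [y e]] := lim_surj (w j); exists (existT _ k y).
have [k hik hk] := sys_ub_fin (fun j => tag (s j)) i.
exists k => //; exists (fun j => push k (tagged (s j))) => j.
by rewrite lim_push ?hs.
Qed.

Lemma lim_eq0_fin n k (e : 'I_n -> M k) : (forall j, g k (e j) = 0) ->
  exists2 k', le k k' & forall j, push k' (e j) = 0.
Proof.
move=> e0; have he j := cid2 (lim_eq0 (e0 j)).
have [k' hkk' hk'] := sys_ub_fin (fun j => sval (he j)) k.
exists k' => // j; case: (he j) (hk' j) => /= k1 hk1 e1 hk1k'.
by rewrite -(push_comp _ hk1 hk1k') e1 (hom0 (push_hom _ _)).
Qed.

Section QuotientSystem.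
Variable S : forall i, M i -> Prop.
Arguments S : clear implicits.
Hypotheses (hS : forall i, is_submod (S i))
  (hSf : forall i j (h : le i j) x, S i x -> S j (f h x)).

Fact qtrans_hom i j (h : le i j) : is_hom (proj (hS j) \o f h).
Proof. exact: hom_comp (sys_hom h) (proj_hom _). Qed.
Fact qtrans_kill i j (h : le i j) x : S i x -> (proj (hS j) \o f h) x = 0.
Proof. by move=> Sx; apply/proj_eq0; apply: hSf. Qed.

Definition qtrans i j (h : le i j) : quotM (hS i) -> quotM (hS j) :=
  qfactor (hS := hS i) (proj (hS j) \o f h).

Lemma qtransE i j (h : le i j) x : qtrans h (proj (hS i) x) = proj (hS j) (f h x).
Proof. exact (qfactorE (hS i) (qtrans_hom h) (@qtrans_kill _ _ h) x). Qed.

Lemma quot_directed_system : directed_system qtrans.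
Proof.
have [refl trans inh dir [_ fid fcomp]] := hD.
split=> //; split=> [i j h|i h|i j k hij hjk hik].
- exact (qfactor_hom (hS i) (qtrans_hom h) (@qtrans_kill _ _ h)).
- by elim/quotM_ind=> x; rewrite qtransE fid.
- by elim/quotM_ind=> x; rewrite !qtransE fcomp.
Qed.

Let hK := lim_image_submod hS hSf.

Fact qlim_hom i : is_hom (proj hK \o g i).
Proof. exact: hom_comp (lim_hom i) (proj_hom _). Qed.
Fact qlim_kill i x : S i x -> (proj hK \o g i) x = 0.
Proof. by move=> Sx; apply/proj_eq0; exists i, x. Qed.

Definition qlim i : quotM (hS i) -> quotM hK := qfactor (hS := hS i) (proj hK \o g i).
Arguments qlim : clear implicits.

Lemma qlimE i x : qlim i (proj (hS i) x) = proj hK (g i x).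
Proof. exact (qfactorE (hS i) (qlim_hom i) (@qlim_kill i) x). Qed.

(* A cone [q] on the quotients lifts to the cone [q \o proj] on [M], whose limit map
   vanishes on the union of the images of the submodules. *)
Lemma quot_direct_limit : is_direct_limit qtrans qlim.
Proof.
have [_ gf U] := hL.
split=> [i|i j h|Q q hq q_compat].
- exact (qfactor_hom (hS i) (qlim_hom i) (@qlim_kill i)).
- by elim/quotM_ind=> x; rewrite qtransE !qlimE gf.
have hq' i : is_hom (q i \o proj (hS i)) := hom_comp (proj_hom _) (hq i).
have q'_compat i j (h : le i j) x : q j (proj (hS j) (f h x)) = q i (proj (hS i) x).
  by rewrite -qtransE q_compat.
have [u [[hu uE] _]] := U Q _ hq' q'_compat.
have u_kill x : (exists i y, S i y /\ g i y = x) -> u x = 0.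
  by move=> [i [y [Sy <-]]]; rewrite uE /= (iffRL (proj_eq0 _ _) Sy) (hom0 (hq i)).
exists (qfactor u); split.
  split; first exact (qfactor_hom hK hu u_kill).
  by move=> i; elim/quotM_ind=> x; rewrite qlimE qfactorE // uE.
move=> v [hv vE]; apply/funext; elim/quotM_ind=> x.
have [i [y <-]] := lim_surj x.
by rewrite -qlimE vE qlimE qfactorE // uE.
Qed.

End QuotientSystem.

End Limit.
End DirectLimits.

Section PPFormulas.
Variable R : nzRingType.
Local Notation Mod := (rmodType R).
Variable tau : ppf R.

Definition pp_lhs (M : Mod) (u : M) (w : 'I_(pp_m tau) -> M) (k : 'I_(pp_n tau)) : M :=
  ract u (pp_a k) + \sum_(j < pp_m tau) ract (w j) (pp_b j k).

Lemma hom_pp_lhs (M N : Mod) (h : M -> N) u w k : is_hom h ->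
  h (pp_lhs u w k) = pp_lhs (h u) (h \o w) k.
Proof.
move=> hh; rewrite /pp_lhs (homD hh) (homZ hh) (hom_sum hh).
by congr (_ + _); apply: eq_bigr => j _; rewrite (homZ hh).
Qed.

Lemma pp_hom (M N : Mod) (h : M -> N) (x : M) :
  is_hom h -> pp_holds tau x -> pp_holds tau (h x).
Proof.
move=> hh [w hw]; exists (h \o w) => k.
by rewrite -[LHS]/(pp_lhs _ _ k) -hom_pp_lhs // [pp_lhs _ _ _]hw (hom0 hh).
Qed.

Lemma pp_prod (I : Type) (M : I -> Mod) (P : Mod) (p : forall i, P -> M i) x :
  is_product p -> (forall i, pp_holds tau (p i x)) -> pp_holds tau x.
Proof.
move=> hP /(_ _) /cid hx.
have /choice [w hw] : forall j, exists x, forall i, p i x = sval (hx i) j.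
  by move=> j; apply: prod_exists hP (fun i => sval (hx i) j).
exists w => k; apply: (prod_ext hP) => i; change (p i (pp_lhs x w k) = p i 0).
rewrite hom_pp_lhs ?(hom0 (hP.1 i)); last exact: hP.1 i.
case: (hx i) (hw ^~ i) => wi /= hwi pw.
have -> : p i \o w = wi by apply/funext => j; exact: pw.
exact (hwi k).
Qed.

Lemma pp_lim (I : Type) (le : I -> I -> Prop) (M : I -> Mod)
    (f : forall i j, le i j -> M i -> M j) (L : Mod) (g : forall i, M i -> L) x :
  directed_system f -> is_direct_limit f g -> pp_holds tau x ->
  exists k y, g k y = x /\ pp_holds tau y.
Proof.
move=> hD hL hx; have [i [y ey]] := lim_surj hD hL x.
subst x; case: hx => w hw.
have [k hik [z hz]] := lim_lift_fin hD hL w i.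
have /(lim_eq0_fin hD hL) [k' hkk' hk'] : forall j, g k (pp_lhs (push f k y) z j) = 0.
  move=> j; rewrite hom_pp_lhs ?(lim_push hL) //; last exact: (lim_hom hL k).
  have -> : g k \o z = w by apply/funext => j'; exact: hz.
  exact (hw j).
exists k', (push f k' (push f k y)); split; first by rewrite !(lim_push hL).
exists (push f k' \o z) => j.
change (pp_lhs (push f k' (push f k y)) (push f k' \o z) j = 0).
by rewrite -hom_pp_lhs ?hk' //; exact: (push_hom hD k k').
Qed.

Lemma definable_pp_all : definable (fun M : Mod => forall u : M, pp_holds tau u).
Proof.
split=> [I M P p hP hM u|M N i hM hi i_inj hpure u|I le M f L g hD hL hM x].
- by apply: pp_prod hP _ => j; apply: hM.
- have [w hw] := hM (i u).
  (* Purity moves the witnesses of [tau (i u)] into the image of [i]. *)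
  have hs (k : 'I_(pp_n tau)) : exists y, i y = - ract (i u) (pp_a k).
    by exists (- ract u (pp_a k)); rewrite (homN hi) (homZ hi).
  have hsol : exists x, forall k,
      \sum_(j < pp_m tau) ract (x j) (pp_b j k) = - ract (i u) (pp_a k).
    by exists w => k; apply/eqP; rewrite -addr_eq0 addrC; apply/eqP; exact: hw.
  have [x [/(_ _) /cid hx hxs]] := hpure _ _ _ _ hs hsol.
  exists (fun j => sval (hx j)) => k; apply: i_inj.
  change (i (pp_lhs u (fun j => sval (hx j)) k) = i 0).
  rewrite hom_pp_lhs // (hom0 hi) /pp_lhs.
  under eq_bigr do rewrite /= (svalP (hx _)).
  by rewrite hxs subrr.
- have [i [y <-]] := lim_surj hD hL x.
  by apply: pp_hom; [exact: (lim_hom hL i) | exact: hM].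
Qed.

Lemma definable_pp_null :
  definable (fun M : Mod => forall u : M, pp_holds tau u -> u = 0).
Proof.
split=> [I M P p hP hM u hu|M N i hM hi i_inj _ u hu|I le M f L g hD hL hM x hx].
- by apply: (prod_ext hP) => j; rewrite (hom0 (hP.1 j)); apply: hM; apply: pp_hom (hP.1 j) hu.
- by apply: i_inj; rewrite (hom0 hi); apply: hM; apply: pp_hom hi hu.
- have [k [y [<- hy]]] := pp_lim hD hL hx.
  by rewrite (hM k y hy) (hom0 (lim_hom hL k)).
Qed.

End PPFormulas.

Section TorsionTheory.
Variable R : nzRingType.
Local Notation Mod := (rmodType R).
Variables (T F : Mod -> Prop) (t : forall M : Mod, M -> Prop).
Arguments t : clear implicits.
Hypotheses (htp : torsion_pair T F) (htr : torsion_radical T t).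

Lemma T_hom_F (X N : Mod) (h : X -> N) : T X -> F N -> is_hom h -> forall x, h x = 0.
Proof. by move=> TX FN hh; apply: ((htp.1 X).1 TX N FN h hh). Qed.

Lemma torsion_image (X M : Mod) (h : X -> M) x : T X -> is_hom h -> t M (h x).
Proof.
move=> TX hh; have hK := ker_submod hh.
have hbar := qfactor_hom hK hh (fun _ e => e).
have hbarE := qfactorE hK hh (fun _ e => e).
have hbar_inj : injective (qfactor (hS := hK) h).
  elim/quotM_ind=> a; elim/quotM_ind=> b; rewrite !hbarE => e.
  by apply/proj_eq; rewrite (homB hh) e subrr.
have TQ : T (quotM hK).
  apply/(htp.1 _).2 => N FN g hg; elim/quotM_ind=> y.
  exact: T_hom_F TX FN (hom_comp (proj_hom hK) hg) y.
by rewrite -hbarE; apply: (htr M).2 TQ hbar hbar_inj _.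
Qed.

Lemma torsion_hom (M N : Mod) (h : M -> N) x : is_hom h -> t M x -> t N (h x).
Proof.
move=> hh; have [X [i [TX hi _ ti]]] := (htr M).1.
by move=> /ti [y <-]; apply: torsion_image TX (hom_comp hi hh).
Qed.

Lemma torsion_submod (M : Mod) : is_submod (t M).
Proof.
have [X [i [_ hi _ ti]]] := (htr M).1.
split=> [|_ _ /ti [a <-] /ti [b <-]|_ /ti [a <-]|_ r /ti [a <-]]; apply/ti.
- by exists 0; rewrite (hom0 hi).
- by exists (a + b); rewrite (homD hi).
- by exists (- a); rewrite (homN hi).
- by exists (ract a r); rewrite (homZ hi).
Qed.

Lemma T_iff (M : Mod) : T M <-> forall x, t M x.
Proof.
split=> [TM x|tM]; first exact: torsion_image TM (hom_id M).
have [X [i [TX hi _ ti]]] := (htr M).1.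
apply/(htp.1 M).2 => N FN g hg x; have [y <-] := (ti x).1 (tM x).
exact: T_hom_F TX FN (hom_comp hi hg) y.
Qed.

Lemma F_iff (M : Mod) : F M <-> forall x, t M x -> x = 0.
Proof.
split=> [FM x|t0].
  by have [X [i [TX hi _ ti]]] := (htr M).1; move=> /ti [y <-]; apply: T_hom_F TX FM hi y.
by apply/(htp.2 M).2 => X TX h hh x; apply: t0; apply: torsion_image TX hh.
Qed.

Lemma torsion_in_submod (M : Mod) (S : M -> Prop) (hS : is_submod S) :
  (forall x, t M x -> S x) -> forall z : subM hS, t M (incl z) -> t (subM hS) z.
Proof.
move=> tS z; have [X [i [TX hi _ ti]]] := (htr M).1.
pose c (y : X) : subM hS := exist S (i y) (tS _ ((ti _).2 (ex_intro _ y erefl))).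
have hc : is_hom c by split=> *; apply: sval_inj; rewrite /= ?(homD hi) ?(homZ hi).
move=> /ti [y iy]; have -> : z = c y by apply: sval_inj; rewrite /= iy.
exact: torsion_image TX hc.
Qed.

Lemma T_torsion_part (M : Mod) : T (subM (torsion_submod M)).
Proof. by apply/T_iff => z; apply: torsion_in_submod => //; apply: incl_mem. Qed.

Lemma T_extension (Z B : Mod) (p : Z -> B) : is_hom p -> (forall b, exists z, p z = b) ->
  T B -> (forall z, p z = 0 -> t Z z) -> T Z.
Proof.
move=> hp p_surj TB ker_t; apply/(htp.1 Z).2 => N FN g hg z.
have gK z' : p z' = 0 -> g z' = 0.
  by move=> /ker_t /(torsion_hom hg); apply: (F_iff N).1 FN (g z').
have [h [hh hE]] := hom_factor_surj hp hg p_surj gK.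
by rewrite -hE; exact: (T_hom_F TB FN hh).
Qed.

(* The preimage [Z] of [t (M / t M)] is an extension of [t (M / t M)] by [t M]. *)
Lemma F_quot_torsion (M : Mod) : F (quotM (torsion_submod M)).
Proof.
set hS := torsion_submod M; set Q := quotM hS.
have hZ := preim_submod (proj_hom hS) (torsion_submod Q).
pose p (z : subM hZ) : subM (torsion_submod Q) := exist (t Q) _ (incl_mem z).
have hp : is_hom p.
  by split=> *; apply: sval_inj; rewrite /= ?(homD (proj_hom hS)) ?(homZ (proj_hom hS)).
have p_surj b : exists z, p z = b.
  have [x ex] := proj_surj (incl b).
  have Zx : t Q (proj hS x) by rewrite ex; apply: incl_mem.
  by exists (exist _ x Zx); apply: sval_inj; rewrite /= ex.
have tM_Z x : t M x -> t Q (proj hS x).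
  by move=> /(proj_eq0 hS) ->; apply: submod0 (torsion_submod Q).
have TZ : T (subM hZ).
  apply: T_extension hp p_surj (T_torsion_part Q) _ => z.
  move=> /(congr1 (@incl _ _ _ (torsion_submod Q))) /= /(proj_eq0 hS).
  exact: torsion_in_submod.
apply/F_iff; elim/quotM_ind=> x tx; apply/proj_eq0.
exact: (torsion_image (exist _ x tx : subM hZ) TZ (incl_hom hZ)).
Qed.

End TorsionTheory.

Section Presentation.
Variable R : nzRingType.
Local Notation Mod := (rmodType R).
Variable M : Mod.

(* Functions [M -> R] of arbitrary support; the finitely presented module with generators
   [G] and relations [Rel] is the quotient of [W] by the functions whose restriction to [G]
   lies in the span of [Rel]. *)
Definition W : Mod := prodM (fun _ : M => (R^c)^o).
Definition coef (v : W) (m : M) : R := v m.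

Lemma coefD v w m : coef (v + w) m = coef v m + coef w m. Proof. by []. Qed.
Lemma coefN v m : coef (- v) m = - coef v m. Proof. by []. Qed.
Lemma coefZ v r m : coef (ract v r) m = coef v m * r. Proof. by []. Qed.
Lemma coef_sum (I : Type) (s : seq I) (P : pred I) (F : I -> W) m :
  coef (\sum_(i <- s | P i) F i) m = \sum_(i <- s | P i) coef (F i) m.
Proof. exact: (big_morph (coef^~ m) (fun v w => coefD v w m) (erefl : coef 0 m = 0)). Qed.
Lemma coef_ext v w : (forall m, coef v m = coef w m) -> v = w.
Proof. exact: functional_extensionality_dep. Qed.

Definition restr (G : seq M) (v : W) : W := fun m => if m \in G then coef v m else 0.
Definition delta (m : M) : W := fun x => (x == m)%:R.
Lemma coef_restr G v m : coef (restr G v) m = if m \in G then coef v m else 0.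
Proof. by []. Qed.
Lemma coef_delta m x : coef (delta m) x = (x == m)%:R. Proof. by []. Qed.

Definition supp (v : W) (G : seq M) := forall m, m \notin G -> coef v m = 0.
Definition evf (N : Mod) (e : M -> N) (G : seq M) (v : W) : N :=
  \sum_(x <- undup G) ract (e x) (coef v x).
Local Notation ev := (evf id).

Lemma restr_hom G : is_hom (restr G).
Proof.
by split=> *; apply: coef_ext => m; rewrite !(coef_restr, coefD, coefZ);
  case: ifP; rewrite ?addr0 ?mul0r.
Qed.

Lemma restr_id G v : supp v G -> restr G v = v.
Proof.
by move=> sv; apply: coef_ext => m; rewrite coef_restr; case: ifPn => // /sv ->.
Qed.

Lemma restr_restr G G' v : {subset G <= G'} -> restr G' (restr G v) = restr G v.
Proof.
move=> sGG'; apply: coef_ext => m; rewrite !coef_restr.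
by case: ifP => mG'; case: ifP => // /sGG'; rewrite mG'.
Qed.

Lemma supp_submod G : is_submod (supp ^~ G).
Proof.
split=> [m _|v w sv sw m mG|v sv m mG|v r sv m mG] //.
- by rewrite coefD (sv m mG) (sw m mG) addr0.
- by rewrite coefN (sv m mG) oppr0.
- by rewrite coefZ (sv m mG) mul0r.
Qed.

Lemma supp_delta G m : m \in G -> supp (delta m) G.
Proof. by move=> mG x xG; rewrite coef_delta; case: eqP => // e; rewrite e mG in xG. Qed.

Lemma evf_hom (N : Mod) (e : M -> N) G : is_hom (evf e G).
Proof.
split=> *; rewrite /evf ?ract_suml -?big_split; apply: eq_bigr => x _.
  by rewrite coefD ractDr.
by rewrite coefZ ractA.
Qed.

Lemma hom_evf (N N' : Mod) (h : N -> N') (e : M -> N) G v :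
  is_hom h -> h (evf e G v) = evf (h \o e) G v.
Proof. by move=> hh; rewrite /evf (hom_sum hh); apply: eq_bigr => x _; rewrite (homZ hh). Qed.

Lemma evf_restr (N : Mod) (e : M -> N) G G' v :
  {subset G <= G'} -> evf e G' (restr G v) = evf e G v.
Proof.
move=> sGG'; rewrite /evf (eq_bigr (fun x => if x \in G then ract (e x) (coef v x) else 0));
  last by move=> x _; rewrite coef_restr; case: ifP; rewrite ?ractr0.
rewrite -big_mkcond -big_filter; apply: perm_big; apply: uniq_perm;
  rewrite ?filter_uniq ?undup_uniq // => x.
by rewrite mem_filter !mem_undup; case xG: (x \in G); rewrite ?(sGG' _ xG).
Qed.

Lemma evf_supp (N : Mod) (e : M -> N) G G' v :
  supp v G -> {subset G <= G'} -> evf e G' v = evf e G v.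
Proof. by move=> sv sGG'; rewrite -(restr_id sv) evf_restr // (restr_id sv). Qed.

Lemma evf_delta (N : Mod) (e : M -> N) G m : m \in G -> evf e G (delta m) = e m.
Proof.
move=> mG; rewrite /evf (bigD1_seq m) ?undup_uniq ?mem_undup //= coef_delta eqxx ract1.
by rewrite big1 ?addr0 // => x /negbTE nx; rewrite coef_delta nx ractr0.
Qed.

Lemma evf_delta_restr G v : evf delta G v = restr G v.
Proof.
apply: coef_ext => m; rewrite /evf coef_sum coef_restr.
case: ifPn => mG.
  rewrite (bigD1_seq m) ?undup_uniq ?mem_undup //= coefZ coef_delta eqxx mul1r.
  by rewrite big1 ?addr0 // => x nx; rewrite coefZ coef_delta eq_sym (negbTE nx) mul0r.
rewrite big_seq big1 // => x; rewrite mem_undup coefZ coef_delta => xG.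
by case: eqP => [e|]; [rewrite e xG in mG | rewrite mul0r].
Qed.

Definition span (Rel : seq W) (v : W) :=
  forall S, is_submod S -> (forall r, r \in Rel -> S r) -> S v.

Lemma span_submod Rel : is_submod (span Rel).
Proof.
split=> [S hS _|v w sv sw S hS RS|v sv S hS RS|v r sv S hS RS].
- exact: submod0.
- exact (submodD hS (sv S hS RS) (sw S hS RS)).
- exact (submodN hS (sv S hS RS)).
- exact (submodZ hS r (sv S hS RS)).
Qed.

Lemma span_mem Rel r : r \in Rel -> span Rel r.
Proof. by move=> rR S _; apply. Qed.

Lemma span_trans Rel Rel' v :
  (forall r, r \in Rel -> span Rel' r) -> span Rel v -> span Rel' v.
Proof. by move=> RR' sv S hS RS; apply: (sv S hS) => r /RR' /(_ S hS RS). Qed.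

Lemma span_kill (N : Mod) (h : W -> N) Rel v :
  is_hom h -> (forall r, r \in Rel -> h r = 0) -> span Rel v -> h v = 0.
Proof. by move=> hh hR /(_ _ (ker_submod hh) hR). Qed.

Lemma eq_evf (N : Mod) (e e' : M -> N) G v : {in G, e =1 e'} -> evf e G v = evf e' G v.
Proof.
move=> ee'; rewrite /evf !big_seq; apply: eq_bigr => x.
by rewrite mem_undup => /ee' ->.
Qed.

Definition valid_pres (p : seq M * seq W) :=
  forall r, r \in p.2 -> supp r p.1 /\ ev p.1 r = 0.

Lemma valid_pres_nil G : valid_pres (G, [::]). Proof. by []. Qed.

Lemma valid_pres1 G r : supp r G -> ev G r = 0 -> valid_pres (G, [:: r]).
Proof. by move=> hs he r'; rewrite inE => /eqP ->. Qed.

Lemma valid_pres_cat G G' Rel Rel' :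
  valid_pres (G, Rel) -> valid_pres (G', Rel') -> valid_pres (G ++ G', Rel ++ Rel').
Proof.
move=> v v' r; rewrite mem_cat => /orP [/v|/v'] [hs he].
  have sGG' : {subset G <= G ++ G'} by move=> m; rewrite mem_cat => ->.
  split; last by rewrite (evf_supp _ hs sGG').
  by move=> m; rewrite mem_cat negb_or => /andP [/hs].
have sG'G : {subset G' <= G ++ G'} by move=> m; rewrite mem_cat orbC => ->.
split; last by rewrite (evf_supp _ hs sG'G).
by move=> m; rewrite mem_cat negb_or => /andP [_ /hs].
Qed.

Definition pres_index := {p : seq M * seq W | valid_pres p}.
Definition gens (i : pres_index) := (sval i).1.
Definition rels (i : pres_index) := (sval i).2.

Definition pres_le (i j : pres_index) :=
  {subset gens i <= gens j} /\ forall r, r \in rels i -> span (rels j) r.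

Definition pres_ker i v := span (rels i) (restr (gens i) v).
Definition pres_ker_submod i : is_submod (pres_ker i) :=
  preim_submod (restr_hom _) (span_submod _).
Definition pres_mod i : Mod := quotM (pres_ker_submod i).
Local Notation pj i := (proj (pres_ker_submod i)).

Lemma pj_restr i v : pj i (restr (gens i) v) = pj i v.
Proof.
apply/proj_eq; rewrite /pres_ker (homB (restr_hom _)) restr_restr // subrr.
exact: submod0 (span_submod _).
Qed.

Lemma pj_rel i r : r \in rels i -> pj i r = 0.
Proof.
move=> rR; apply/proj_eq0; have [hs _] := svalP i r rR.
by rewrite /pres_ker restr_id //; apply: span_mem.
Qed.

Fact pres_trans_hom i j : is_hom (pj j \o restr (gens i)).
Proof. exact: hom_comp (restr_hom _) (proj_hom _). Qed.
Fact pres_trans_kill i j (h : pres_le i j) v : pres_ker i v -> (pj j \o restr (gens i)) v = 0.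
Proof.
case: h => sG sR kv; apply/proj_eq0; rewrite /pres_ker /= restr_restr //.
exact: span_trans sR kv.
Qed.

Definition pres_trans i j (h : pres_le i j) : pres_mod i -> pres_mod j :=
  qfactor (hS := pres_ker_submod i) (pj j \o restr (gens i)).

Lemma pres_transE i j (h : pres_le i j) v : pres_trans h (pj i v) = pj j (restr (gens i) v).
Proof. exact (qfactorE _ (pres_trans_hom i j) (pres_trans_kill h) v). Qed.

Fact pres_lim_kill i v : pres_ker i v -> ev (gens i) v = 0.
Proof.
move=> kv; rewrite -(evf_restr _ _ (fun x (xG : x \in gens i) => xG)).
by apply: span_kill (evf_hom _ _) _ kv => r /(svalP i r) [].
Qed.

Definition pres_lim i : pres_mod i -> M := qfactor (hS := pres_ker_submod i) (ev (gens i)).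
Arguments pres_lim : clear implicits.

Lemma pres_limE i v : pres_lim i (pj i v) = ev (gens i) v.
Proof. exact (qfactorE _ (evf_hom _ _) (@pres_lim_kill i) v). Qed.

Lemma pres_directed_system : directed_system pres_trans.
Proof.
split=> [i|i j k [sij rij] [sjk rjk]|||].
- by split=> // r; apply: span_mem.
- split=> [x /sij /sjk //|r /rij]; exact: span_trans.
- exact (inhabits (exist _ _ (@valid_pres_nil [::]))).  
- move=> i j; pose k := exist valid_pres _ (valid_pres_cat (svalP i) (svalP j)).
  by exists k; split; split=> x xi; rewrite ?mem_cat ?xi ?orbT //; apply: span_mem;
    rewrite /rels /= mem_cat xi ?orbT.
split=> [i j h|i h|i j k hij hjk hik]; last 2 first.
- by elim/quotM_ind=> v; rewrite pres_transE pj_restr.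
- by elim/quotM_ind=> v; rewrite !pres_transE restr_restr //; case: hij.
exact (qfactor_hom _ (pres_trans_hom i j) (pres_trans_kill h)).
Qed.

Definition pres1 (m : M) : pres_index := exist valid_pres _ (@valid_pres_nil [:: m]).

Section Cone.
Variables (Q : Mod) (q : forall i, pres_mod i -> Q).
Arguments q : clear implicits.
Hypotheses (hq : forall i, is_hom (q i))
  (q_compat : forall i j (h : pres_le i j) y, q j (pres_trans h y) = q i y).

Definition cone_gen (m : M) : Q := q (pres1 m) (pj _ (delta m)).

Lemma cone_genE i m : m \in gens i -> cone_gen m = q i (pj i (delta m)).
Proof.
move=> mi; have le1 : pres_le (pres1 m) i by split=> // x; rewrite inE => /eqP ->.
by rewrite /cone_gen -(q_compat le1) pres_transE restr_id //; apply: supp_delta; rewrite inE.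
Qed.

Lemma cone_evf i v : q i (pj i v) = evf cone_gen (gens i) v.
Proof.
rewrite -pj_restr -evf_delta_restr (hom_evf _ _ _ (proj_hom _)) (hom_evf _ _ _ (hq i)).
by apply: eq_evf => m /cone_genE.
Qed.

Lemma cone_gen_rel G r : supp r G -> ev G r = 0 -> evf cone_gen G r = 0.
Proof.
move=> hs he; pose i := exist valid_pres _ (valid_pres1 hs he).
by rewrite -[G]/(gens i) -cone_evf pj_rel ?(hom0 (hq i)) // inE.
Qed.

(* Additivity and scalability of [cone_gen] are relations of suitable presentations. *)
Lemma cone_gen_hom : is_hom cone_gen.
Proof.
split=> [m m'|r m].
  set G := [:: m; m'; m + m'].
  have [m1 m2 m3] : [/\ m \in G, m' \in G & m + m' \in G] by rewrite !inE !eqxx !orbT.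
  pose d := delta (m + m') - (delta m + delta m').
  have hs : supp d G.
    exact (submodB (supp_submod G) (supp_delta m3)
      (submodD (supp_submod G) (supp_delta m1) (supp_delta m2))).
  have evd (N : Mod) (e : M -> N) : evf e G d = e (m + m') - (e m + e m').
    by rewrite (homB (evf_hom _ _)) (homD (evf_hom _ _)) !evf_delta.
  have := cone_gen_rel hs; rewrite !evd /= subrr => /(_ erefl) /eqP.
  by rewrite subr_eq0 => /eqP.
set G := [:: m; ract m r].
have [m1 m2] : m \in G /\ ract m r \in G by rewrite !inE !eqxx !orbT.
pose d := delta (ract m r) - ract (delta m) r.
have hs : supp d G.
  exact (submodB (supp_submod G) (supp_delta m2) (submodZ (supp_submod G) r (supp_delta m1))).
have evd (N : Mod) (e : M -> N) : evf e G d = e (ract m r) - ract (e m) r.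
  by rewrite (homB (evf_hom _ _)) (homZ (evf_hom _ _)) !evf_delta.
have := cone_gen_rel hs; rewrite !evd /= subrr => /(_ erefl) /eqP.
by rewrite subr_eq0 => /eqP.
Qed.

End Cone.

Lemma pres_direct_limit : is_direct_limit pres_trans pres_lim.
Proof.
split=> [i|i j h|Q q hq q_compat].
- exact (qfactor_hom _ (evf_hom _ _) (@pres_lim_kill i)).
- by elim/quotM_ind=> v; rewrite pres_transE !pres_limE evf_restr //; case: h.
have hu := cone_gen_hom hq q_compat.
exists (cone_gen q); split.
  split=> // i; elim/quotM_ind=> v.
  by rewrite pres_limE /= (hom_evf _ _ _ hu) (cone_evf hq q_compat).
move=> u' [hu' u'E]; apply/funext => m.
have := u'E (pres1 m) (pj _ (delta m)).
by rewrite pres_limE evf_delta ?inE.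
Qed.

(* For [y = pj c], the formula says: [u = sum_j w_j c(g_j)] and [sum_j w_j r(g_j) = 0] for each
   relation [r], where [g_j] enumerates the generators; its solutions in [N] are exactly the
   images of [y] under homomorphisms [pres_mod i -> N]. *)
Lemma pres_pp i (y : pres_mod i) : exists tau : ppf R, pp_holds tau (pres_lim i y) /\
  forall (N : Mod) (u : N), pp_holds tau u -> exists h : pres_mod i -> N, is_hom h /\ h y = u.
Proof.
elim/quotM_ind: y => c.
set G := gens i; set Rel := rels i; pose a := size (undup G).
pose gen (j : 'I_a) := nth 0 (undup G) j.
have genG j : gen j \in G by rewrite -mem_undup mem_nth.
have evfE (N : Mod) (e : M -> N) v : evf e G v = \sum_(j < a) ract (e (gen j)) (coef v (gen j)).
  by rewrite /evf (big_nth 0) big_mkord.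
pose tau := @PPF R a (size Rel).+1 (fun k => ((k : nat) == 0)%:R)
  (fun j k => if (k : nat) is l.+1 then coef Rel`_l (gen j) else - coef c (gen j)).
exists tau; split.
  exists gen; case=> -[|l] hl /=; rewrite pres_limE.
    rewrite ract1 evfE; apply/eqP; rewrite addr_eq0 -sumrN; apply/eqP.
    by apply: eq_bigr => j _; rewrite ractNr opprK.
  have [_] := svalP i _ (mem_nth 0 (hl : l < size Rel)%N).
  by rewrite ractr0 add0r evfE.
move=> N u [w hw].
pose H v := \sum_(j < a) ract (w j) (coef v (gen j)).
have hH : is_hom H.
  split=> *; rewrite /H ?ract_suml -?big_split; apply: eq_bigr => j _.
    by rewrite coefD ractDr.
  by rewrite coefZ ractA.
have H_kill v : pres_ker i v -> H v = 0.
  have -> : H v = H (restr G v) by apply: eq_bigr => j _; rewrite coef_restr genG.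
  apply: span_kill hH _ => r rR.
  have := hw (@Ordinal (size Rel).+1 (index r Rel).+1 _); rewrite /= nth_index // ractr0 add0r.
  by apply; rewrite ltnS index_mem.
exists (qfactor (hS := pres_ker_submod i) H); split; first exact (qfactor_hom _ hH H_kill).
rewrite (qfactorE _ hH H_kill).
have := hw (@Ordinal (size Rel).+1 0 isT); rewrite /= ract1 => /eqP; rewrite addr_eq0 => /eqP ->.
by rewrite -sumrN; apply: eq_bigr => j _; rewrite ractNr opprK.
Qed.

End Presentation.

Section CoherentSubfunctor.
Variable R : nzRingType.
Local Notation Mod := (rmodType R).
Variable t : forall M : Mod, M -> Prop.
Arguments t : clear implicits.
Hypotheses (t_hom : forall (M N : Mod) (h : M -> N) x, is_hom h -> t M x -> t N (h x))
  (t_coh : coherent_subfunctor t).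

Definition pp_inside (phi : ppf R) := forall (N : Mod) (u : N), pp_holds phi u -> t N u.

Lemma coherent_pp_cover (M : Mod) (x : M) :
  t M x -> exists2 phi, pp_inside phi & pp_holds phi x.
Proof.
move=> tx; have [lim_t _] :=
  t_coh.2 _ _ _ _ _ _ (@pres_directed_system _ M) (@pres_direct_limit _ M).
have [i [y [ty <-]]] := lim_t x tx.
have [phi [hphi phi_gen]] := pres_pp y.
by exists phi => // N u /phi_gen [h [hh <-]]; apply: t_hom hh ty.
Qed.

Lemma coherent_pp_definable :
  exists tau : ppf R, forall (M : Mod) (x : M), t M x <-> pp_holds tau x.
Proof.
apply: contrapT => no_tau.
have bad (p : {phi | pp_inside phi}) :
    exists q : {N : Mod & N}, t _ (tagged q) /\ ~ pp_holds (sval p) (tagged q).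
  apply: contrapT => none; apply: no_tau; exists (sval p) => N x.
  split=> [tx|]; last exact: (svalP p).
  by apply: contrapT => nx; apply: none; exists (existT _ N x).
have [q hq] := choice bad.
have hP := prodM_is_product (fun p => tag (q p)).
have [z [tz ez]] := (t_coh.1 _ _ _ _ hP).2 (fun p => tagged (q p)) (fun p => (hq p).1).
have [psi psi_in psi_z] := coherent_pp_cover tz.
have := pp_hom (hP.1 (exist _ psi psi_in)) psi_z.
by rewrite ez; apply: (hq (exist _ psi psi_in)).2.
Qed.

End CoherentSubfunctor.

Section ElementaryTorsionPairs.
Variable R : nzRingType.
Local Notation Mod := (rmodType R).
Variables (T F : Mod -> Prop) (t : forall M : Mod, M -> Prop).
Arguments t : clear implicits.
Hypotheses (htp : torsion_pair T F) (htr : torsion_radical T t).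

Lemma elementary_coherent : elementary T F -> coherent_subfunctor t.
Proof.
move=> [[Tprod _ _] [_ _ Fdlim]]; split=> [I M P p hP|I le M f L g hD hL].
  split=> [x y _ _|y ty]; first exact: (prod_ext hP).
  pose X i := subM (torsion_submod htr (M i)).
  have hX := prodM_is_product X.
  have TX : T (prodM X) := Tprod _ _ _ _ hX (fun i => T_torsion_part htp htr (M i)).
  have [h [[hh hE] _]] := hP.2 _ _ (fun i => hom_comp (hX.1 i) (incl_hom _)).
  exists (h (fun i => exist _ (y i) (ty i))); split; first exact (torsion_image htp htr _ TX hh).
  by move=> i; rewrite hE.
split=> [x tx|i j y y' _ _]; last exact: (lim_eq hD hL).
pose hS i := torsion_submod htr (M i).
have hSf i j (h : le i j) y : t _ y -> t _ (f i j h y) := torsion_hom htp htr (sys_hom hD h).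
have FL := Fdlim _ _ _ _ _ _ (quot_directed_system hD hS hSf) (quot_direct_limit hD hL hS hSf)
  (fun i => F_quot_torsion htp htr (M i)).
have /proj_eq0 [i [y [ty <-]]] := (F_iff htp htr _).1 FL _ (torsion_hom htp htr (proj_hom _) tx).
by exists i, y.
Qed.

Lemma pp_torsion_classes (tau : ppf R) : (forall (M : Mod) (x : M), t M x <-> pp_holds tau x) ->
  (forall M : Mod, T M <-> forall u : M, pp_holds tau u) /\
  (forall M : Mod, F M <-> forall u : M, pp_holds tau u -> u = 0).
Proof.
move=> ht; split=> M; rewrite ?(T_iff htp htr) ?(F_iff htp htr).
  by split=> h u; apply/ht.
by split=> h u /ht; apply: h.
Qed.

Lemma pp_elementary (tau : ppf R) : (forall (M : Mod) (x : M), t M x <-> pp_holds tau x) ->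
  elementary T F.
Proof.
move=> /pp_torsion_classes [hT hF].
have -> : T = fun M => forall u : M, pp_holds tau u by apply/funext => M; apply/propext.
have -> : F = fun M => forall u : M, pp_holds tau u -> u = 0 by apply/funext => M; apply/propext.
by split; [exact: definable_pp_all | exact: definable_pp_null].
Qed.

End ElementaryTorsionPairs.

Theorem theorem1p4 (R : nzRingType) (T F : rmodType R -> Prop)
    (t : forall M : rmodType R, M -> Prop) :
  torsion_pair T F -> torsion_radical T t ->
  (elementary T F <-> coherent_subfunctor t) /\
  (elementary T F <-> exists tau : ppf R, forall (M : rmodType R) (x : M),
      t M x <-> pp_holds tau x) /\
  (forall tau : ppf R, (forall (M : rmodType R) (x : M), t M x <-> pp_holds tau x) ->
     (forall M : rmodType R, T M <-> forall u : M, pp_holds tau u) /\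
     (forall M : rmodType R, F M <-> forall u : M, pp_holds tau u -> u = 0)).
Proof.
move=> htp htr.
have coh_pp : coherent_subfunctor t ->
    exists tau : ppf R, forall (M : rmodType R) (x : M), t M x <-> pp_holds tau x.
  exact: coherent_pp_definable (torsion_hom htp htr).
have pp_elem := pp_elementary htp htr.
split; [|split].
- split; first exact: elementary_coherent.
  by move=> /coh_pp [tau]; apply: pp_elem.
- split; first by move=> /(elementary_coherent htp htr) /coh_pp.
  by move=> [tau]; apply: pp_elem.
- exact: pp_torsion_classes.
Qed.
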